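(* Let $n\ge 2$ and let $A\subset S^n=\{x\in\mathbb R^{n+1}:\|x\|=1\}$ be a closed subset with $0<\mathrm{diam}(A)\le 1$. Then there exist distinct points $a_0,a_1\in A$ and a unit vector $b\in\mathbb R^{n+1}$ such that $\langle b,a_0\rangle=0=\max_{a\in A}\langle b,a\rangle$ and $\langle b,a_1\rangle>-\frac12\|a_1-a_0\|$.
   Context: $\langle\cdot,\cdot\rangle$ is the standard inner product and $\|\cdot\|$ the Euclidean norm on $\mathbb R^{n+1}$. *)

From HB Require Import structures.
From mathcomp Require Import all_boot all_order all_algebra.
From mathcomp Require Import all_classical all_reals all_analysis.
Set Implicit Arguments. Unset Strict Implicit. Unset Printing Implicit Defensive.
Import Order.TTheory GRing.Theory Num.Theory.
Import numFieldNormedType.Exports.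
Local Open Scope ring_scope.
Local Open Scope classical_set_scope.

Definition dotp (R : realType) (m : nat) (u v : 'rV[R]_m) : R :=
  \sum_(i < m) u ord0 i * v ord0 i.

Definition enorm (R : realType) (m : nat) (u : 'rV[R]_m) : R :=
  Num.sqrt (dotp u u).

Definition sphere (R : realType) (n : nat) : set 'rV[R]_n.+1 :=
  [set x | enorm x = 1].

Definition diam (R : realType) (m : nat) (A : set 'rV[R]_m) : R :=
  sup [set d | exists x y, [/\ A x, A y & d = enorm (x - y)]].
Arguments sphere : clear implicits.

From HB Require Import structures.
From mathcomp Require Import all_boot all_order all_algebra.
From mathcomp Require Import all_classical all_reals all_analysis.
From mathcomp Require Import ring lra zify.
Import Order.TTheory GRing.Theory Num.Theory.
Import numFieldNormedType.Exports.
Local Open Scope ring_scope.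
Local Open Scope classical_set_scope.

(** Points of [A] are at mutual distance at most 1, so [<x, y> >= 1/2] on [A].
    Pick [c != q] in [A], [w != 0] orthogonal to [c] and [q] (this is where
    [n >= 2] is used) and [u = q - <c, q> c]. For each real [s], maximise the
    ratio [<w + s u, x> / <c, x>] over the compact set [A], at [a_s] with
    maximum [m_s]: then [w + s u - m_s c] is a supporting normal of [A] at [a_s]
    of length at least [|w|], and [m_s] is [2|u|]-Lipschitz in [s]. If two
    close parameters have distinct maximisers, the normal at one of them makes
    the required small angle with the chord to the other maximiser. Otherwise,
    sweeping [s] from [L] down to [-L] in small steps yields a single point
    maximising both extreme ratios, which is impossible for large [L]. *)

Section InnerProduct.
Context {R : realType} {m : nat}.
Implicit Types (u v w : 'rV[R]_m) (k : R).

Lemma dotpC u v : dotp u v = dotp v u.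
Proof. by rewrite /dotp; apply: eq_bigr => i _; rewrite mulrC. Qed.

Lemma dotpDl u v w : dotp (u + v) w = dotp u w + dotp v w.
Proof. by rewrite /dotp -big_split; apply: eq_bigr => i _; rewrite mxE mulrDl. Qed.

Lemma dotpZl k u w : dotp (k *: u) w = k * dotp u w.
Proof. by rewrite /dotp mulr_sumr; apply: eq_bigr => i _; rewrite mxE mulrA. Qed.

Lemma dotpNl u w : dotp (- u) w = - dotp u w.
Proof. by rewrite -scaleN1r dotpZl mulN1r. Qed.

Lemma dotpBl u v w : dotp (u - v) w = dotp u w - dotp v w.
Proof. by rewrite dotpDl dotpNl. Qed.

Lemma dotpDr u v w : dotp w (u + v) = dotp w u + dotp w v.
Proof. by rewrite dotpC dotpDl !(dotpC w). Qed.

Lemma dotpZr k u w : dotp w (k *: u) = k * dotp w u.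
Proof. by rewrite dotpC dotpZl dotpC. Qed.

Lemma dotpNr u w : dotp w (- u) = - dotp w u.
Proof. by rewrite dotpC dotpNl dotpC. Qed.

Lemma dotpBr u v w : dotp w (u - v) = dotp w u - dotp w v.
Proof. by rewrite dotpDr dotpNr. Qed.

Lemma dotp0l u : dotp 0 u = 0.
Proof. by rewrite -(scale0r 0) dotpZl mul0r. Qed.

Lemma dotpp_ge0 u : 0 <= dotp u u.
Proof. by apply: sumr_ge0 => i _; rewrite -expr2 sqr_ge0. Qed.

Lemma dotpp_eq0 u : (dotp u u == 0) = (u == 0).
Proof.
apply/idP/idP => [/eqP uu0|/eqP->]; last by rewrite dotp0l.
apply/eqP/rowP => i; rewrite mxE; apply/eqP; rewrite -sqrf_eq0 expr2.
have u2_ge0 j : true -> 0 <= u ord0 j * u ord0 j by rewrite -expr2 sqr_ge0.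
by apply/eqP; exact: (psumr_eq0P u2_ge0 uu0).
Qed.

Lemma CauchySchwarz_dotp u v : dotp u v ^+ 2 <= dotp u u * dotp v v.
Proof.
have [/eqP|vv_neq0] := eqVneq (dotp v v) 0.
  by rewrite dotpp_eq0 => /eqP->; rewrite dotpC !dotp0l mulr0 expr2 mulr0.
have vv_gt0 : 0 < dotp v v by rewrite lt_def vv_neq0 dotpp_ge0.
have := dotpp_ge0 (dotp v v *: u - dotp u v *: v).
rewrite !(dotpBl, dotpBr, dotpZl, dotpZr) (dotpC v u) => h.
have : 0 <= dotp v v * (dotp u u * dotp v v - dotp u v ^+ 2).
  by move: h; congr (_ <= _); ring.
by rewrite pmulr_rge0 // subr_ge0.
Qed.

Lemma enorm_ge0 u : 0 <= enorm u.
Proof. exact: sqrtr_ge0. Qed.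

Lemma enorm_gt0 {u} : u != 0 -> 0 < enorm u.
Proof. by move=> u0; rewrite sqrtr_gt0 lt_def dotpp_eq0 u0 dotpp_ge0. Qed.

Lemma enorm_sqr u : enorm u ^+ 2 = dotp u u.
Proof. by rewrite /enorm sqr_sqrtr // dotpp_ge0. Qed.

Lemma CauchySchwarz_dotp_sqrt u v : `|dotp u v| <= enorm u * enorm v.
Proof.
rewrite -sqrtr_sqr /enorm -sqrtrM ?dotpp_ge0 // ler_sqrt ?CauchySchwarz_dotp //.
by rewrite mulr_ge0 ?dotpp_ge0.
Qed.

Lemma enorm_normalize u : u != 0 -> enorm ((enorm u)^-1 *: u) = 1.
Proof.
move=> u0; rewrite /enorm dotpZl dotpZr mulrA -expr2 exprVn enorm_sqr.
by rewrite mulVf ?sqrtr1 // dotpp_eq0.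
Qed.

Lemma continuous_dotp u : continuous (dotp u).
Proof.
move=> x.
suff sum_cont r : {for x, continuous (fun y : 'rV[R]_m =>
                               \sum_(i <- r) u ord0 i * y ord0 i)} by exact: sum_cont.
elim: r => [|i r IH].
  rewrite (_ : (fun y => _) = cst 0); first exact: cst_continuous.
  by apply: funext => y; rewrite big_nil.
rewrite (_ : (fun y => _) = (fun y : 'rV[R]_m => u ord0 i * y ord0 i) +
                            (fun y => \sum_(j <- r) u ord0 j * y ord0 j)).
  apply: continuousD => //; apply: continuousM; first exact: cst_continuous.
  exact: coord_continuous.
by apply: funext => y; rewrite big_cons.
Qed.

End InnerProduct.

Lemma exists_orthogonal_nonzero {R : realType} {m : nat} (c q : 'rV[R]_m) :
  (2 < m)%N -> exists2 w, w != 0 & dotp w c = 0 /\ dotp w q = 0.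
Proof.
move=> m_gt2; pose M := row_mx c^T q^T.
have /rowV0Pn [w] : kermx M != 0.
  by rewrite -mxrank_eq0 mxrank_ker; have := rank_leq_col M; lia.
rewrite sub_kermx mul_mx_row row_mx_eq0 => /andP [/eqP wc /eqP wq] w_neq0.
have dotp_mulmx v : dotp w v = (w *m v^T) ord0 ord0.
  by rewrite mxE; apply: eq_bigr => j _; rewrite !mxE.
by exists w; rewrite ?dotp_mulmx ?wc ?wq ?mxE.
Qed.

Section Support.
Context {R : realType} {m : nat}.
Variable A : set 'rV[R]_m.

Definition supporting (a b : 'rV[R]_m) :=
  dotp b a = 0 /\ forall x, A x -> dotp b x <= 0.

Definition shallow_support :=
  exists a0 a1 b : 'rV[R]_m,
    [/\ A a0, A a1, a0 != a1 & enorm b = 1] /\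
    [/\ dotp b a0 = 0,
        (forall a, A a -> dotp b a <= 0) &
        dotp b a1 > - (enorm (a1 - a0) / 2)].

Lemma supporting_dotp_ge {a a' b b'} : A a' -> supporting a b -> supporting a' b' ->
  - (enorm (b' - b) * enorm (a - a')) <= dotp b' a.
Proof.
move=> Aa' [ba b_le0] [b'a' _].
have -> : dotp b' a = dotp b (a - a') + dotp (b' - b) (a - a').
  by rewrite !(dotpBl, dotpBr) b'a'; ring.
have := CauchySchwarz_dotp_sqrt (b' - b) (a - a'); rewrite ler_norml => /andP [+ _].
by rewrite [dotp b _]dotpBr ba; have := b_le0 a' Aa'; lra.
Qed.

Lemma shallow_support_of_close_normals {a a' b b'} :
  A a -> A a' -> a != a' -> supporting a b -> supporting a' b' ->
  2 * enorm (b' - b) < enorm b' -> shallow_support.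
Proof.
move=> Aa Aa' aa' b_supp b'_supp normals_close.
have b'_gt0 : 0 < enorm b' by apply: le_lt_trans normals_close; rewrite mulr_ge0 ?enorm_ge0.
have b'_neq0 : b' != 0.
  by apply: contraTneq b'_gt0 => ->; rewrite /enorm dotp0l sqrtr0 ltxx.
have e_gt0 : 0 < enorm (a - a') by rewrite enorm_gt0 // subr_eq0.
have gap := supporting_dotp_ge Aa' b_supp b'_supp.
have [b'a' b'_le0] := b'_supp.
exists a', a, ((enorm b')^-1 *: b'); split.
  by split=> //; [rewrite eq_sym | exact: enorm_normalize].
split=> [|x Ax|]; rewrite dotpZl.
- by rewrite b'a' mulr0.
- by rewrite mulr_ge0_le0 ?b'_le0 // invr_ge0 ltW.
rewrite [_^-1 * _]mulrC ltr_pdivlMr //.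
have : enorm (b' - b) * enorm (a - a') * 2 < enorm b' * enorm (a - a').
  by rewrite mulrAC ltr_pM2r // mulrC.
lra.
Qed.

End Support.

Section Sphere.
Context {R : realType} {n : nat} {A : set 'rV[R]_n.+1}.
Hypothesis A_sphere : A `<=` sphere R n.

Lemma dotpp_sphere {x} : A x -> dotp x x = 1.
Proof. by move=> /A_sphere /= x1; rewrite -enorm_sqr x1 expr1n. Qed.

Lemma dotp_subr_sphere {x y} : A x -> A y ->
  dotp (x - y) (x - y) = 2 - 2 * dotp x y.
Proof.
move=> Ax Ay; rewrite !(dotpBl, dotpBr) (dotpC y x) !dotpp_sphere //; ring.
Qed.

Lemma bounded_sub_sphere : bounded_set A.
Proof.
exists 1; split; first exact: num_real.
move=> M M_gt1 x Ax /=; apply: le_trans (ltW M_gt1).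
rewrite [leLHS]/Num.norm /= mx_normrE; apply: bigmax_le => // -[i j] _ /=.
have : x i j * x i j <= 1.
  rewrite -(dotpp_sphere Ax) /dotp (ord1 i) (bigD1 j) //= lerDl.
  by apply: sumr_ge0 => k _; rewrite -expr2 sqr_ge0.
by move=> xij_le1; rewrite ler_norml; apply/andP; split; nra.
Qed.

Lemma enorm_subr_le_diam {x y} : A x -> A y -> enorm (x - y) <= diam A.
Proof.
move=> Ax Ay; apply: sup_upper_bound; last by exists x, y.
split; first by exists (enorm (x - y)), x, y.
exists 2 => _ [x' [y' [Ax' Ay' ->]]].
have := CauchySchwarz_dotp_sqrt x' y'; rewrite (A_sphere _ Ax') (A_sphere _ Ay') mulr1.
rewrite ler_norml => /andP [xy_ge _].
have := enorm_sqr (x' - y'); rewrite dotp_subr_sphere // => e2.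
have := enorm_ge0 (x' - y'); nra.
Qed.

Lemma dotp_ge_half_diam_le1 {x y} : diam A <= 1 -> A x -> A y -> 1 / 2 <= dotp x y.
Proof.
move=> diam_le1 Ax Ay; have := enorm_subr_le_diam Ax Ay.
have := enorm_sqr (x - y); rewrite dotp_subr_sphere // => e2.
have := enorm_ge0 (x - y); nra.
Qed.

End Sphere.

Lemma diam_gt0_exists_neq {R : realType} {m : nat} {A : set 'rV[R]_m} :
  0 < diam A -> exists x y, [/\ A x, A y & x != y].
Proof.
move=> diam_gt0; apply: contrapT => no_pair.
suff : diam A <= 0 by rewrite leNgt diam_gt0.
rewrite /diam; set S := [set d | _].
have S_le0 : ubound S 0.
  move=> _ [x [y [Ax Ay ->]]]; have -> : x = y.
    by apply/eqP/negPn/negP => xy; apply: no_pair; exists x, y.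
  by rewrite subrr /enorm dotp0l sqrtr0.
have [S_neq0|/nonemptyPn ->] := pselect (S !=set0); last by rewrite sup0.
exact: ge_sup.
Qed.

Lemma exists_nat_div_lt (R : archiRealFieldType) (x e : R) :
  0 <= x -> 0 < e -> exists N : nat, x / N.+1%:R < e.
Proof.
move=> x_ge0 e_gt0; exists (Num.Def.archi_bound (x / e)).
rewrite ltr_pdivrMr // mulrC -ltr_pdivrMr //.
apply: lt_le_trans (archi_boundP _) _; first by rewrite divr_ge0 // ltW.
by rewrite ler_nat.
Qed.

Lemma witness_arith_progression {R : numDomainType} {T : Type} {P : R -> T -> Prop}
    {h s : R} {a : T} :
  (forall s, exists a, P s a) ->
  (forall s a a', P s a -> P (s - h) a' -> a = a') ->
  P s a -> forall k : nat, P (s - k%:R * h) a.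
Proof.
move=> P_total P_step Psa; elim=> [|k IH]; first by rewrite mul0r subr0.
have -> : s - k.+1%:R * h = s - k%:R * h - h by rewrite -addn1 natrD; ring.
have [a' Pa'] := P_total (s - k%:R * h - h).
by rewrite (P_step _ _ _ IH Pa').
Qed.

Section Slope.
Context {R : realType} {m : nat} {A : set 'rV[R]_m}.
Variables c u w : 'rV[R]_m.
Hypotheses (A_unit : forall x, A x -> enorm x = 1) (A_compact : compact A) (Ac : A c)
  (c_half : forall x, A x -> 1 / 2 <= dotp c x).
Hypotheses (wc : dotp w c = 0) (uc : dotp u c = 0) (wu : dotp w u = 0).

Definition slope s x := (dotp w x + s * dotp u x) / dotp c x.

Definition slope_argmax s a := A a /\ forall x, A x -> slope s x <= slope s a.

Definition slope_normal s a := w + s *: u - slope s a *: c.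

Lemma dotpcc : dotp c c = 1.
Proof. by rewrite -enorm_sqr A_unit // expr1n. Qed.

Lemma dotp_c_gt0 {x} : A x -> 0 < dotp c x.
Proof. by move=> /c_half; apply: lt_le_trans. Qed.

Lemma slope_mulr s x : A x -> slope s x * dotp c x = dotp w x + s * dotp u x.
Proof. by move=> Ax; rewrite divfK // gt_eqF // dotp_c_gt0. Qed.

Lemma slope_shift s s' x : A x ->
  slope s' x = slope s x + (s' - s) * (dotp u x / dotp c x).
Proof. by move=> Ax; rewrite /slope; field; rewrite gt_eqF // dotp_c_gt0. Qed.

Lemma abs_dotp_ratio_le z {x} : A x -> `|dotp z x / dotp c x| <= 2 * enorm z.
Proof.
move=> Ax; have := CauchySchwarz_dotp_sqrt z x; rewrite (A_unit _ Ax) mulr1 => zx_le.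
rewrite normrM normfV (gtr0_norm (dotp_c_gt0 Ax)) ler_pdivrMr ?dotp_c_gt0 //.
have := c_half _ Ax; have := normr_ge0 (dotp z x); nra.
Qed.

Lemma continuous_slope s : {within A, continuous (slope s)}.
Proof.
apply: continuous_in_subspaceT => x; rewrite in_setE => Ax.
apply: (@continuousM _ _ (fun y => dotp w y + s * dotp u y) (fun y => (dotp c y)^-1)).
  apply: (@continuousD _ _ _ (fun y => dotp w y) (fun y => s * dotp u y)).
    exact: continuous_dotp.
  apply: (@continuousM _ _ (fun=> s) (fun y => dotp u y)).
    exact: cst_continuous.
  exact: continuous_dotp.
apply: continuousV; first by rewrite gt_eqF // dotp_c_gt0.
exact: continuous_dotp.
Qed.

Lemma exists_slope_argmax s : exists a, slope_argmax s a.
Proof.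
have [a Aa a_max] := EVT_max_rV (ex_intro _ c Ac) A_compact (continuous_slope s).
exists a; split=> [|x Ax]; first by rewrite -in_setE.
by apply: a_max; rewrite in_setE.
Qed.

Lemma dotp_slope_normal s a x : A x ->
  dotp (slope_normal s a) x = (slope s x - slope s a) * dotp c x.
Proof. by move=> Ax; rewrite mulrBl slope_mulr // !(dotpBl, dotpDl, dotpZl). Qed.

Lemma supporting_slope_normal {s a} : slope_argmax s a -> supporting A a (slope_normal s a).
Proof.
move=> [Aa a_max]; split; first by rewrite dotp_slope_normal // subrr mul0r.
move=> x Ax; rewrite dotp_slope_normal // mulr_le0_ge0 ?subr_le0 ?a_max //.
exact/ltW/dotp_c_gt0.
Qed.

Lemma enorm_slope_normal_sub s s' a a' :
  enorm (slope_normal s' a' - slope_normal s a) ^+ 2 =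
  (s' - s) ^+ 2 * dotp u u + (slope s' a' - slope s a) ^+ 2.
Proof.
rewrite enorm_sqr /slope_normal; set t := slope s a; set t' := slope s' a'.
have -> : w + s' *: u - t' *: c - (w + s *: u - t *: c) = (s' - s) *: u - (t' - t) *: c.
  by apply/rowP => i; rewrite !mxE; ring.
rewrite !(dotpBl, dotpBr, dotpZl, dotpZr) dotpcc uc (dotpC c u) uc; ring.
Qed.

Lemma enorm_slope_normal_ge s a : enorm w <= enorm (slope_normal s a).
Proof.
rewrite /enorm ler_sqrt ?dotpp_ge0 // /slope_normal.
rewrite !(dotpDl, dotpDr, dotpNl, dotpNr, dotpZl, dotpZr) dotpcc.
rewrite wu wc uc (dotpC u w) wu (dotpC c w) wc (dotpC c u) uc.
have := dotpp_ge0 u; have := sqr_ge0 s; have := sqr_ge0 (slope s a); nra.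
Qed.

Lemma slope_argmax_lipschitz {s s' a a'} : slope_argmax s a -> slope_argmax s' a' ->
  `|slope s' a' - slope s a| <= 2 * enorm u * `|s' - s|.
Proof.
move=> [Aa a_max] [Aa' a'_max].
have shift_le x : A x -> `|(s' - s) * (dotp u x / dotp c x)| <= 2 * enorm u * `|s' - s|.
  by move=> Ax; rewrite normrM mulrC ler_wpM2r ?abs_dotp_ratio_le.
have := a'_max a Aa; rewrite (slope_shift s) //.
have := a_max a' Aa'; rewrite (slope_shift s' s) // -opprB mulNr.
have := shift_le a Aa; have := shift_le a' Aa'; rewrite !ler_norml.
lra.
Qed.

Lemma shallow_support_of_slope_jump {s s' a a'} :
  6 * (enorm u * `|s' - s|) < enorm w ->
  slope_argmax s a -> slope_argmax s' a' -> a != a' -> shallow_support A.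
Proof.
move=> jump_small sa s'a' aa'.
apply: (shallow_support_of_close_normals A sa.1 s'a'.1 aa'
  (supporting_slope_normal sa) (supporting_slope_normal s'a')).
have w_le := enorm_slope_normal_ge s' a'.
have := slope_argmax_lipschitz sa s'a'; rewrite -mulrA ler_norml => /andP [lip1 lip2].
have := enorm_slope_normal_sub s s' a a'.
rewrite -(real_normK (num_real (s' - s))) -enorm_sqr.
have := enorm_ge0 (slope_normal s' a' - slope_normal s a).
set e := enorm (_ - _); set N := enorm (slope_normal s' a').
set t := slope s' a' - _; set d := enorm u * `|s' - s| => e_ge0 e2.
rewrite -/t -/d in lip1 lip2 jump_small; rewrite -/N in w_le.
have d_ge0 : 0 <= d by rewrite mulr_ge0 ?enorm_ge0.
have t2_le : t ^+ 2 <= (2 * d) ^+ 2 by nra.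
have e2_le : e ^+ 2 <= 5 * d ^+ 2.
  by rewrite e2; move: t2_le; rewrite /d !exprMn; lra.
have : (6 * d) ^+ 2 < N ^+ 2 by rewrite ltrXn2r ?mulr_ge0 ?enorm_ge0 //; lra.
rewrite -(@ltr_pXn2r _ 2) ?inE ?nnegrE ?mulr_ge0 ?enorm_ge0 //.
nra.
Qed.

Lemma no_common_slope_argmax L q a : A q ->
  6 * enorm w < L * (dotp u q / dotp c q) ->
  slope_argmax L a -> ~ slope_argmax (- L) a.
Proof.
(* The [u]-terms cancel in the sum of the two ratios, which is thus at most [4|w|]. *)
move=> Aq L_large [Aa a_maxL] [_ a_maxNL].
have slope_q : slope L q = dotp w q / dotp c q + L * (dotp u q / dotp c q).
  by rewrite /slope mulrDl mulrA.
have slope_c : slope (- L) c = 0 by rewrite /slope wc uc mulr0 addr0 mul0r.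
have slope_sum : slope L a + slope (- L) a = 2 * (dotp w a / dotp c a).
  by rewrite /slope; field; rewrite gt_eqF // dotp_c_gt0.
have := a_maxL q Aq; have := a_maxNL c Ac.
have := abs_dotp_ratio_le w Aq; have := abs_dotp_ratio_le w Aa; rewrite !ler_norml.
lra.
Qed.

Lemma shallow_support_of_slope_sweep L q : w != 0 -> A q ->
  6 * enorm w < L * (dotp u q / dotp c q) -> shallow_support A.
Proof.
move=> w_neq0 Aq L_large; apply: contrapT => no_shallow.
have [N step_small] : exists N : nat, 2 * `|L| * enorm u * 6 / N.+1%:R < enorm w.
  by apply: exists_nat_div_lt; rewrite ?enorm_gt0 // !mulr_ge0 ?enorm_ge0.
pose h := 2 * L / N.+1%:R.
have argmax_step s a a' : slope_argmax s a -> slope_argmax (s - h) a' -> a = a'.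
  move=> sa sa'; apply/eqP/negPn/negP => aa'; apply: no_shallow.
  apply: (shallow_support_of_slope_jump _ sa sa' aa').
  rewrite addrAC subrr add0r normrN /h !normrM normfV !normr_nat.
  by rewrite (_ : 6 * _ = 2 * `|L| * enorm u * 6 / N.+1%:R) //; ring.
have [a aL] := exists_slope_argmax L.
have := witness_arith_progression exists_slope_argmax argmax_step aL N.+1.
rewrite (_ : L - N.+1%:R * h = - L); last by rewrite /h; field.
exact: no_common_slope_argmax Aq L_large aL.
Qed.

End Slope.

Theorem lemma2p2 (R : realType) (n : nat) (A : set 'rV[R]_n.+1) :
  (2 <= n)%N ->
  A `<=` sphere R n ->
  closed A ->
  0 < diam A <= 1 ->
  exists a0 a1 b : 'rV[R]_n.+1,
    [/\ A a0, A a1, a0 != a1 & enorm b = 1] /\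
    [/\ dotp b a0 = 0,
        (forall a, A a -> dotp b a <= 0) &
        dotp b a1 > - (enorm (a1 - a0) / 2)].
Proof.
move=> n_ge2 A_sphere A_closed /andP [diam_gt0 diam_le1].
have A_unit x : A x -> enorm x = 1 by move/A_sphere.
have A_compact := bounded_closed_compact (bounded_sub_sphere A_sphere) A_closed.
have [c [q [Ac Aq cq]]] := diam_gt0_exists_neq diam_gt0.
have c_half x : A x -> 1 / 2 <= dotp c x := dotp_ge_half_diam_le1 A_sphere diam_le1 Ac.
have [w w_neq0 [wc wq]] := exists_orthogonal_nonzero c q (n_ge2 : (2 < n.+1)%N).
pose u := q - dotp c q *: c.
have uc : dotp u c = 0.
  by rewrite /u dotpBl dotpZl (dotpC q) (dotpp_sphere A_sphere Ac) mulr1 subrr.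
have wu : dotp w u = 0 by rewrite /u dotpBr dotpZr wc wq mulr0 subrr.
have cq_lt1 : dotp c q < 1.
  have : 0 < dotp (c - q) (c - q) by rewrite lt_def dotpp_eq0 subr_eq0 cq dotpp_ge0.
  rewrite (dotp_subr_sphere A_sphere Ac Aq); lra.
have cq_gt0 : 0 < dotp c q by apply: lt_le_trans (c_half q Aq).
have uq_gt0 : 0 < dotp u q.
  by rewrite /u dotpBl dotpZl (dotpp_sphere A_sphere Aq); nra.
apply: (shallow_support_of_slope_sweep c u w A_unit A_compact Ac c_half wc uc wu
          (7 * enorm w / (dotp u q / dotp c q)) q w_neq0 Aq).
rewrite divfK ?gt_eqF ?divr_gt0 //; have := enorm_gt0 w_neq0; lra.
Qed.
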